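(* For any $M>1$ there exists $\kappa_0=\kappa_0(M)>0$ such that for all integers $1\le m<M$ and all $0\le\kappa<\kappa_0$, there is a solution $(\lambda_1,b_0)\in\mathbb{R}\times C^\infty([-1,1])$ of $$(1+\lambda_1-z)\,b_0(z)=-\frac1{2m}\int_{-1}^1\varphi'_\kappa(\bar z)\,b_0(\bar z)\,d\bar z,\qquad z\in[-1,1].$$ For fixed $m$ and $\kappa$ this solution is unique (modulo multiplication of $b_0$ by a constant) and satisfies $$b_0(z)=\frac1{1+\lambda_1-z},\qquad \lambda_1=\frac{2}{e^{4m}-1}+\mathrm{error},\quad |\mathrm{error}|\le C(M)\kappa.$$ Moreover $\|b_0\|_{L^2([-1,1])}\le C(M)$, $\|\partial_z^kb_0\|_{L^\infty([-1,1])}\le C(k,M)$ for $k=0,1,2,\dots$, and the number $a_1$ defined by $2a_1=-\frac1{2m}e^{-2m}\int_{-1}^1\varphi'_\kappa(\bar z)b_0(\bar z)\,d\bar z$ equals $a_1=\frac12e^{-2m}$. Here the constants $C(M)$, $C(k,M)$ depend only on $M$ (and $k$), not on $m$ or $\kappa$.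
   Context: Fix $\Theta\in C^\infty(\mathbb{R})$, $\Theta>0$ on $(-1,1)$, $\operatorname{supp}\Theta\subset(-1,1)$, $\int\Theta=1$. For $\kappa>0$: $\Theta_\kappa(z)=\kappa^{-1}\Theta(z/\kappa)$, $\psi'_\kappa(z)=\int_{-1+\kappa}^{1-\kappa}\Theta_\kappa(z-\bar z)d\bar z$, and $\varphi_\kappa(z)=1-\int_{-1}^z\psi'_\kappa/\int_{-1}^1\psi'_\kappa$ for $z\in[-1,1]$; for $\kappa=0$, $\varphi_0(z)=(1-z)/2$. *)

From Stdlib Require Import Reals.
From Coquelicot Require Import Coquelicot.
Open Scope R_scope.

Definition smooth (g : R -> R) : Prop :=
  forall (n : nat) (x : R), ex_derive_n g n x.

(* f belongs to C^infinity([a,b]): f agrees on [a,b] with a C^infinity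
   function on R (Whitney/Seeley: same as one-sided smoothness). *)
Definition smooth_on_cc (a b : R) (f : R -> R) : Prop :=
  exists g : R -> R, smooth g /\ forall x, a <= x <= b -> f x = g x.

Definition Theta_k (Theta : R -> R) (k : R) (z : R) : R :=
  / k * Theta (z / k).

Definition psi'_k (Theta : R -> R) (k : R) (z : R) : R :=
  RInt (fun zb => Theta_k Theta k (z - zb)) (-1 + k) (1 - k).

Definition phi_k (Theta : R -> R) (k : R) (z : R) : R :=
  if Req_EM_T k 0 then (1 - z) / 2
  else 1 - RInt (psi'_k Theta k) (-1) z / RInt (psi'_k Theta k) (-1) 1.

Definition phi'_k (Theta : R -> R) (k : R) (z : R) : R :=
  Derive (phi_k Theta k) z.

Definition solves (Theta : R -> R) (m : nat) (k lam : R) (b : R -> R) : Prop :=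
  forall z, -1 <= z <= 1 ->
    (1 + lam - z) * b z =
      - (1 / (2 * INR m)) * RInt (fun zb => phi'_k Theta k zb * b zb) (-1) 1.

(* For kappa > 0, phi'_kappa = - psi'_kappa / (int psi'_kappa), and phi'_0 = -1/2;
   either way phi'_kappa = -w for a continuous probability density w on [-1,1].
   Since psi'_kappa = 1 outside the 2 kappa-neighbourhoods of +-1, the Stieltjes
   transform F_w(mu) = int w(z) / (1 + mu - z) dz is within 4 kappa / mu of that
   of the uniform density, which is (1/2) ln ((2 + mu) / mu).
   In the equation, (1 + lam - z) b(z) is a constant K; continuity of a nonzero b
   forces K <> 0, so b = K / (1 + lam - z) with no pole in [-1,1], and the
   equation collapses to F_w(lam) = 2m.  F_w is strictly decreasing on (0, oo),
   with an explicit two-sided bound on its difference quotients, and negative on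
   (-oo, -2): this gives uniqueness, and with the intermediate value theorem a
   root within 48 kappa / lambda0(M) of the uniform root lambda0(m), where
   lambda0(m) = 2 / (e^(4m) - 1) decreases in m.  All bounds on
   b0 = 1 / (1 + lam - z) then only use lam >= lambda0(M) / 2. *)

From Stdlib Require Import Reals Lra Lia Factorial.
From Coquelicot Require Import Coquelicot.
Open Scope R_scope.

Definition Cn (n : nat) (f : R -> R) : Prop :=
  forall k x, (k <= n)%nat -> ex_derive_n f k x.

Lemma Derive_n_Derive (f : R -> R) (j : nat) (x : R) :
  Derive_n (Derive f) j x = Derive_n f (S j) x.
Proof.
  replace (S j) with (j + 1)%nat by lia.
  rewrite <- Derive_n_comp. now apply Derive_n_ext.
Qed.

Lemma ex_derive_n_Derive (f : R -> R) (j : nat) (x : R) :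
  ex_derive_n (Derive f) (S j) x <-> ex_derive_n f (S (S j)) x.
Proof.
  split; apply ex_derive_ext; intro t; [|symmetry]; apply Derive_n_Derive.
Qed.

Lemma Cn_S (n : nat) (f : R -> R) :
  Cn (S n) f <-> (forall x, ex_derive f x) /\ Cn n (Derive f).
Proof.
  split.
  - intros H; split.
    + intro x. apply (H 1%nat). lia.
    + intros [|j] x Hj; [exact I|].
      apply (proj2 (ex_derive_n_Derive f j x)), H. lia.
  - intros [H1 H2] [|[|j]] x Hj; [exact I|apply H1|].
    apply (proj1 (ex_derive_n_Derive f j x)), H2. lia.
Qed.

Lemma CnS_Cn (n : nat) (f : R -> R) : Cn (S n) f -> Cn n f.
Proof. intros H k x Hk. apply H. lia. Qed.

Lemma Cn_ext (n : nat) (f g : R -> R) : (forall x, f x = g x) -> Cn n f -> Cn n g.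
Proof. intros E H k x Hk. apply (ex_derive_n_ext f); auto. Qed.

Lemma Cn_0 (f : R -> R) : Cn 0 f.
Proof. intros k x Hk. replace k with 0%nat by lia. exact I. Qed.

Lemma Cn_const (n : nat) (c : R) : Cn n (fun _ => c).
Proof. intros k x _. apply ex_derive_n_const. Qed.

Lemma Cn_id (n : nat) : Cn n (fun x => x).
Proof.
  apply (Cn_ext n (fun x => x ^ 1)); [intro; ring|].
  intros k x _. apply ex_derive_n_pow.
Qed.

Lemma Cn_plus (n : nat) (f g : R -> R) :
  Cn n f -> Cn n g -> Cn n (fun x => f x + g x).
Proof.
  revert f g; induction n as [|n IH]; intros f g Hf Hg; [apply Cn_0|].
  apply Cn_S in Hf as [Df Hf]. apply Cn_S in Hg as [Dg Hg].
  apply Cn_S. split; [intro x; apply (ex_derive_plus f g); auto|].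
  apply (Cn_ext _ _ _ (fun x => eq_sym (Derive_plus f g x (Df x) (Dg x)))).
  now apply IH.
Qed.

Lemma Cn_mult (n : nat) (f g : R -> R) :
  Cn n f -> Cn n g -> Cn n (fun x => f x * g x).
Proof.
  revert f g; induction n as [|n IH]; intros f g Hf Hg; [apply Cn_0|].
  pose proof (CnS_Cn _ _ Hf) as Hf'. pose proof (CnS_Cn _ _ Hg) as Hg'.
  apply Cn_S in Hf as [Df Hf]. apply Cn_S in Hg as [Dg Hg].
  apply Cn_S. split; [intro x; apply (ex_derive_mult f g); auto|].
  apply (Cn_ext _ _ _ (fun x => eq_sym (Derive_mult f g x (Df x) (Dg x)))).
  apply Cn_plus; apply IH; auto.
Qed.

Lemma Cn_inv (n : nat) (f : R -> R) :
  Cn n f -> (forall x, f x <> 0) -> Cn n (fun x => / f x).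
Proof.
  intros Hf Hnz. induction n as [|n IH]; [apply Cn_0|].
  specialize (IH (CnS_Cn _ _ Hf)).
  apply Cn_S in Hf as [Df Hf].
  apply Cn_S. split; [intro x; apply ex_derive_inv; auto|].
  apply (Cn_ext _ (fun x => - Derive f x * (/ f x * / f x))).
  - intro x. rewrite Derive_inv; auto. field. auto.
  - apply (Cn_ext _ (fun x => -1 * (Derive f x * (/ f x * / f x)))); [intro; ring|].
    apply Cn_mult; [apply Cn_const|]. apply Cn_mult; [|apply Cn_mult]; auto.
Qed.

Lemma Cn_comp_affine (n : nat) (f : R -> R) (a c : R) :
  Cn n f -> Cn n (fun x => f (a * (x - c))).
Proof.
  revert f; induction n as [|n IH]; intros f Hf; [apply Cn_0|].
  apply Cn_S in Hf as [Df Hf].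
  apply Cn_S. split.
  - intro x. apply (ex_derive_comp f (fun x => a * (x - c))); auto. auto_derive; auto.
  - apply (Cn_ext _ (fun x => a * Derive f (a * (x - c)))).
    + intro x. rewrite (Derive_comp f (fun x => a * (x - c))); auto.
      2: auto_derive; auto.
      f_equal. symmetry. apply is_derive_unique. auto_derive; auto. ring.
    + apply Cn_mult; [apply Cn_const|]. now apply IH.
Qed.

Lemma smooth_Cn (f : R -> R) : smooth f <-> forall n, Cn n f.
Proof. split; intros H n; [intros k x _; apply H | intro x; now apply (H n)]. Qed.

(* Coquelicot states its integral lemmas in a normed module, with [scal] and
   [plus]; the lemmas below are their real-valued forms, usable by [rewrite].
   Equations between integrals are likewise typed in the module carrier, where
   [ring] and [field] do not apply until [eq_in_R] recasts them in [R]. *)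
Ltac eq_in_R := match goal with |- ?x = ?y => change (@eq R x y) end.

Lemma RInt_extR (f g : R -> R) (a b : R) :
  (forall x, Rmin a b < x < Rmax a b -> f x = g x) -> RInt f a b = RInt g a b.
Proof. exact (RInt_ext f g a b). Qed.

Lemma RInt_scalR (f : R -> R) (a b l : R) :
  ex_RInt f a b -> RInt (fun x => l * f x) a b = l * RInt f a b.
Proof. exact (RInt_scal f a b l). Qed.

Lemma RInt_plusR (f g : R -> R) (a b : R) : ex_RInt f a b -> ex_RInt g a b ->
  RInt (fun x => f x + g x) a b = RInt f a b + RInt g a b.
Proof. exact (RInt_plus f g a b). Qed.

Lemma RInt_minusR (f g : R -> R) (a b : R) : ex_RInt f a b -> ex_RInt g a b ->
  RInt (fun x => f x - g x) a b = RInt f a b - RInt g a b.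
Proof. exact (RInt_minus f g a b). Qed.

Lemma RInt_constR (a b c : R) : RInt (fun _ => c) a b = (b - a) * c.
Proof. exact (RInt_const a b c). Qed.

Lemma ex_RInt_scalR (f : R -> R) (a b l : R) :
  ex_RInt f a b -> ex_RInt (fun x => l * f x) a b.
Proof. exact (ex_RInt_scal f a b l). Qed.

Lemma ex_RInt_plusR (f g : R -> R) (a b : R) :
  ex_RInt f a b -> ex_RInt g a b -> ex_RInt (fun x => f x + g x) a b.
Proof. exact (ex_RInt_plus f g a b). Qed.

Lemma RInt_mult_bounds (u h : R -> R) (a b lo hi : R) : a <= b ->
  ex_RInt u a b -> ex_RInt (fun x => u x * h x) a b ->
  (forall x, a < x < b -> 0 <= u x /\ lo <= h x <= hi) ->
  lo * RInt u a b <= RInt (fun x => u x * h x) a b <= hi * RInt u a b.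
Proof.
  intros Hab Hu Huh H. rewrite <- !RInt_scalR by exact Hu.
  split; apply RInt_le; auto using ex_RInt_scalR;
    intros x Hx; destruct (H x Hx); nra.
Qed.

Lemma ex_RInt_continuous_11 (f : R -> R) :
  (forall z, -1 <= z <= 1 -> continuous f z) -> ex_RInt f (-1) 1.
Proof.
  intros H. apply (@ex_RInt_continuous R_CompleteNormedModule). intros z.
  rewrite Rmin_left, Rmax_right by lra. apply H.
Qed.

Lemma smooth_continuous (f : R -> R) (x : R) : smooth f -> continuous f x.
Proof.
  intros H. apply (@ex_derive_continuous R_AbsRing R_NormedModule). exact (H 1%nat x).
Qed.

Lemma continuous_inv_shift (c z : R) : c - z <> 0 -> continuous (fun z => / (c - z)) z.
Proof.
  intros H. apply (@ex_derive_continuous R_AbsRing R_NormedModule). auto_derive. exact H.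
Qed.

Lemma sqrt_le_1_plus (x c : R) : 0 <= c -> x <= c -> sqrt x <= 1 + c.
Proof.
  intros Hc Hx. destruct (Rle_dec 0 x).
  - rewrite <- (sqrt_pow2 (1 + c)) by lra. apply sqrt_le_1_alt. nra.
  - rewrite sqrt_neg_0; lra.
Qed.

Lemma continuity_Rmax_lipschitz (f : R -> R) (a c : R) : 0 < c ->
  (forall u v, a <= u -> a <= v -> Rabs (f u - f v) <= c * Rabs (u - v)) ->
  continuity (fun x => f (Rmax a x)).
Proof.
  intros Hc Hf x eps Heps. exists (eps / c). split; [apply Rdiv_lt_0_compat; lra|].
  intros y [_ Hy]. simpl in *. unfold R_dist in *.
  assert (Hm : Rabs (Rmax a y - Rmax a x) <= Rabs (y - x)).
  { unfold Rmax. destruct Rle_dec, Rle_dec; unfold Rabs; repeat destruct Rcase_abs; lra. }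
  eapply Rle_lt_trans; [apply Hf; apply Rmax_l|].
  replace eps with (c * (eps / c)) by (field; lra).
  apply Rle_lt_trans with (c * Rabs (y - x)); [nra|].
  apply Rmult_lt_compat_l; lra.
Qed.

Lemma Derive_n_inv_sub (c : R) (n : nat) (t : R) : t < c ->
  Derive_n (fun t => / (c - t)) n t = INR (fact n) / (c - t) ^ S n.
Proof.
  revert t; induction n as [|n IH]; intros t Ht; [simpl; field; lra|].
  change (Derive (Derive_n (fun t => / (c - t)) n) t
          = INR (fact (S n)) / (c - t) ^ S (S n)).
  rewrite (Derive_ext_loc _ (fun y => INR (fact n) / (c - y) ^ S n)).
  2:{ apply (filter_imp (fun u => u < c)); [apply IH|exact (open_lt c t Ht)]. }
  apply is_derive_unique. auto_derive.
  - apply Rmult_integral_contrapositive; split; [lra|apply pow_nonzero; lra].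
  - (* [auto_derive] leaves [INR (S n)] unfolded *)
    change (match n with 0%nat => 1 | S _ => INR n + 1 end) with (INR (S n)).
    rewrite fact_simpl, mult_INR, S_INR.
    assert ((c + - t) ^ n <> 0) by (apply pow_nonzero; lra).
    unfold Rminus. rewrite <- !tech_pow_Rmult. field. lra.
Qed.

Lemma continuous_nonzero_elsewhere (f : R -> R) (a b x : R) : a < b -> a <= x <= b ->
  continuous f x -> f x <> 0 -> exists z, a <= z <= b /\ z <> x /\ f z <> 0.
Proof.
  intros Hab Hx Hc Hf.
  destruct (Hc _ (open_neq 0 (f x) Hf)) as [d Hd].
  pose proof (cond_pos d) as Hd0.
  set (e := Rmin d (b - a) / 2).
  assert (He : 0 < e < d /\ e <= (b - a) / 2).
  { unfold e, Rmin. destruct Rle_dec; lra. }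
  set (z := if Rle_dec x ((a + b) / 2) then x + e else x - e).
  assert (Hz : Rabs (z - x) = e).
  { unfold z. destruct Rle_dec; [rewrite Rabs_pos_eq | rewrite Rabs_left]; lra. }
  exists z. split; [|split].
  - unfold z. destruct Rle_dec; lra.
  - intro E. rewrite E, Rminus_diag, Rabs_R0 in Hz. lra.
  - apply Hd. unfold ball; simpl; unfold AbsRing_ball, abs, minus, plus, opp; simpl.
    replace (z + - x) with (z - x) by ring. lra.
Qed.

Definition stieltjes (w : R -> R) (mu : R) : R :=
  RInt (fun z => w z * / (1 + mu - z)) (-1) 1.

Definition near_uniform (w : R -> R) (k : R) : Prop :=
  forall mu, 0 < mu ->
    Rabs (stieltjes w mu - stieltjes (fun _ => / 2) mu) <= 4 * k / mu.

Section Stieltjes.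

Variable w : R -> R.
Hypothesis w_cont : forall z, continuous w z.
Hypothesis w_ge0 : forall z, -1 <= z <= 1 -> 0 <= w z.
Hypothesis w_int : RInt w (-1) 1 = 1.

Lemma ex_RInt_stieltjes (mu : R) : (forall z, -1 <= z <= 1 -> 1 + mu - z <> 0) ->
  ex_RInt (fun z => w z * / (1 + mu - z)) (-1) 1.
Proof.
  intros H. apply ex_RInt_continuous_11. intros z Hz.
  apply (continuous_mult w (fun z => / (1 + mu - z))); [apply w_cont|].
  apply continuous_inv_shift. auto.
Qed.

Lemma stieltjes_sub_bounds (mu mu' : R) : 0 < mu <= mu' ->
  (mu' - mu) / ((2 + mu) * (2 + mu')) <= stieltjes w mu - stieltjes w mu'
    <= (mu' - mu) / (mu * mu').
Proof.
  intros Hm. unfold stieltjes.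
  rewrite <- RInt_minusR by (apply ex_RInt_stieltjes; intros; lra).
  set (g := fun z => (mu' - mu) / ((1 + mu - z) * (1 + mu' - z))).
  rewrite (RInt_extR _ (fun z => w z * g z)).
  2:{ intros z Hz. rewrite Rmin_left, Rmax_right in Hz by lra. unfold g. field. lra. }
  pose proof (RInt_mult_bounds w g (-1) 1 ((mu' - mu) / ((2 + mu) * (2 + mu')))
                ((mu' - mu) / (mu * mu'))) as H.
  rewrite w_int, !Rmult_1_r in H. apply H; [lra| | |].
  - apply ex_RInt_continuous_11. intros; apply w_cont.
  - apply ex_RInt_continuous_11. intros z Hz.
    apply (continuous_mult w g); [apply w_cont|].
    apply (@ex_derive_continuous R_AbsRing R_NormedModule). unfold g.
    auto_derive. apply Rmult_integral_contrapositive; lra.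
  - intros z Hz. split; [apply w_ge0; lra|]. unfold g, Rdiv.
    split; apply Rmult_le_compat_l; try lra; apply Rinv_le_contravar; nra.
Qed.

Lemma stieltjes_neg (mu : R) : mu < -2 -> stieltjes w mu < 0.
Proof.
  intros Hm.
  pose proof (RInt_mult_bounds w (fun z => / (1 + mu - z)) (-1) 1 (/ (mu + 2)) (/ mu)) as H.
  rewrite w_int, !Rmult_1_r in H. apply Rle_lt_trans with (/ mu).
  - apply H; [lra| |apply ex_RInt_stieltjes; intros; lra|].
    + apply ex_RInt_continuous_11. intros; apply w_cont.
    + intros z Hz. split; [apply w_ge0; lra|].
      assert (E : forall x, x < 0 -> / x = - / (- x)) by (intros; field; lra).
      rewrite (E (mu + 2)), (E (1 + mu - z)), (E mu) by lra.
      split; apply Ropp_le_contravar, Rinv_le_contravar; lra.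
  - apply Rinv_lt_0_compat. lra.
Qed.

Lemma stieltjes_lipschitz (a u v : R) : 0 < a -> a <= u -> a <= v ->
  Rabs (stieltjes w u - stieltjes w v) <= / (a * a) * Rabs (u - v).
Proof.
  intros Ha.
  assert (Hle : forall u v, a <= u <= v ->
            Rabs (stieltjes w u - stieltjes w v) <= / (a * a) * Rabs (u - v)).
  { intros u' v' Huv. destruct (stieltjes_sub_bounds u' v') as [T1 T2]; [lra|].
    assert (0 <= (v' - u') / ((2 + u') * (2 + v'))) by (apply Rdiv_le_0_compat; nra).
    assert ((v' - u') / (u' * v') <= / (a * a) * (v' - u')).
    { unfold Rdiv. rewrite Rmult_comm. apply Rmult_le_compat_r; [lra|].
      apply Rinv_le_contravar; nra. }
    rewrite Rabs_pos_eq, Rabs_minus_sym, Rabs_pos_eq; lra. }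
  intros Hu Hv. destruct (Rle_dec u v); [apply Hle; lra|].
  rewrite Rabs_minus_sym, (Rabs_minus_sym u). apply Hle; lra.
Qed.

Lemma stieltjes_root_near (y l0 L k : R) : 0 < L <= l0 -> l0 <= / 2 ->
  0 <= k < L * L / 96 -> Rabs (stieltjes w l0 - y) <= 4 * k / l0 ->
  exists lam, stieltjes w lam = y /\ L / 2 <= lam /\ Rabs (lam - l0) <= 48 * k / L.
Proof.
  intros HL Hl0 Hk Hy.
  set (d := 48 * k / L).
  assert (Hd : 0 <= d <= L / 2).
  { unfold d. split; [apply Rdiv_le_0_compat; lra|].
    apply (Rmult_le_reg_r L); [lra|]. field_simplify; nra. }
  assert (Hy' : Rabs (stieltjes w l0 - y) <= d / 12).
  { apply (Rle_trans _ _ _ Hy). replace (d / 12) with (4 * k / L) by (unfold d; field; lra).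
    unfold Rdiv. apply Rmult_le_compat_l; [lra|]. apply Rinv_le_contravar; lra. }
  apply Rabs_le_between in Hy'.
  set (a := l0 - d). set (b := l0 + d).
  assert (Fa : y <= stieltjes w a).
  { destruct (stieltjes_sub_bounds a l0) as [T _]; [unfold a; lra|].
    assert (d / 12 <= (l0 - a) / ((2 + a) * (2 + l0))).
    { replace (l0 - a) with d by (unfold a; ring). unfold Rdiv.
      apply Rmult_le_compat_l; [lra|]. apply Rinv_le_contravar; unfold a; nra. }
    lra. }
  assert (Fb : stieltjes w b <= y).
  { destruct (stieltjes_sub_bounds l0 b) as [T _]; [unfold b; lra|].
    assert (d / 12 <= (b - l0) / ((2 + l0) * (2 + b))).
    { replace (b - l0) with d by (unfold b; ring). unfold Rdiv.
      apply Rmult_le_compat_l; [lra|]. apply Rinv_le_contravar; unfold b; nra. }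
    lra. }
  (* [IVT_gen] wants continuity on all of [R]; clamping the argument at [a]
     keeps it where [stieltjes w] is Lipschitz. *)
  destruct (IVT_gen (fun mu => stieltjes w (Rmax a mu)) a b y) as [lam [Hlam Flam]].
  - apply (continuity_Rmax_lipschitz _ _ (/ (a * a))).
    + apply Rinv_0_lt_compat. unfold a. nra.
    + intros u v Hu Hv. apply stieltjes_lipschitz; unfold a in *; lra.
  - rewrite Rmax_left, Rmax_right by (unfold a, b; lra).
    split; [apply Rle_trans with (stieltjes w b); [apply Rmin_r|lra]
           |apply Rle_trans with (stieltjes w a); [lra|apply Rmax_l]].
  - rewrite Rmin_left, Rmax_right in Hlam by (unfold a, b; lra).
    rewrite Rmax_right in Flam by lra.
    exists lam. unfold a, b in Hlam. split; [exact Flam|split; [lra|]].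
    apply Rabs_le. lra.
Qed.

Lemma stieltjes_inj (lam lam' : R) : 0 < lam -> 0 < stieltjes w lam ->
  (forall z, -1 <= z <= 1 -> 1 + lam' - z <> 0) ->
  stieltjes w lam' = stieltjes w lam -> lam' = lam.
Proof.
  intros Hl HF Hnz E.
  destruct (Rlt_dec 0 lam') as [Hl'|Hl'].
  - destruct (Rtotal_order lam' lam) as [Hlt|[Heq|Hgt]]; auto; exfalso.
    + destruct (stieltjes_sub_bounds lam' lam) as [T _]; [lra|].
      assert (0 < (lam - lam') / ((2 + lam') * (2 + lam))) by (apply Rdiv_lt_0_compat; nra).
      lra.
    + destruct (stieltjes_sub_bounds lam lam') as [T _]; [lra|].
      assert (0 < (lam' - lam) / ((2 + lam) * (2 + lam'))) by (apply Rdiv_lt_0_compat; nra).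
      lra.
  - destruct (Rlt_dec lam' (-2)) as [Hl2|Hl2].
    + pose proof (stieltjes_neg lam' Hl2). lra.
    + exfalso. apply (Hnz (1 + lam')); [lra|ring].
Qed.

End Stieltjes.

Definition lambda0 (m : R) : R := 2 / (exp (4 * m) - 1).

Lemma lambda0_pos (m : R) : 0 < m -> 0 < lambda0 m.
Proof.
  intros Hm. pose proof (exp_ineq1 (4 * m) ltac:(lra)).
  apply Rdiv_lt_0_compat; lra.
Qed.

Lemma lambda0_le (m m' : R) : 0 < m < m' -> lambda0 m' <= lambda0 m.
Proof.
  intros Hm. pose proof (exp_ineq1 (4 * m) ltac:(lra)).
  pose proof (exp_increasing (4 * m) (4 * m') ltac:(lra)).
  unfold lambda0, Rdiv. apply Rmult_le_compat_l; [lra|]. apply Rinv_le_contravar; lra.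
Qed.

Lemma lambda0_le_half (m : R) : 1 <= m -> lambda0 m <= / 2.
Proof.
  intros Hm. pose proof (exp_ineq1 (4 * m) ltac:(lra)).
  unfold lambda0. apply (Rmult_le_reg_r (exp (4 * m) - 1)); [lra|].
  field_simplify; lra.
Qed.

Lemma stieltjes_uniform (mu : R) : 0 < mu ->
  stieltjes (fun _ => / 2) mu = / 2 * ln ((2 + mu) / mu).
Proof.
  intros Hmu. unfold stieltjes.
  rewrite RInt_scalR
    by (apply ex_RInt_continuous_11; intros; apply continuous_inv_shift; lra).
  f_equal. apply is_RInt_unique. rewrite ln_div by lra.
  replace (ln (2 + mu) - ln mu) with (minus (- ln (1 + mu - 1)) (- ln (1 + mu - -1)))
    by (unfold minus, plus, opp; simpl;
        replace (1 + mu - 1) with mu by ring;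
        replace (1 + mu - -1) with (2 + mu) by ring; ring).
  apply (is_RInt_derive (fun z => - ln (1 + mu - z))); rewrite Rmin_left, Rmax_right by lra;
    intros z Hz.
  - auto_derive; [lra|field; lra].
  - apply continuous_inv_shift. lra.
Qed.

Lemma stieltjes_uniform_lambda0 (m : R) : 0 < m ->
  stieltjes (fun _ => / 2) (lambda0 m) = 2 * m.
Proof.
  intros Hm. pose proof (exp_ineq1 (4 * m) ltac:(lra)).
  rewrite stieltjes_uniform by now apply lambda0_pos.
  replace ((2 + lambda0 m) / lambda0 m) with (exp (4 * m)) by (unfold lambda0; field; lra).
  rewrite ln_exp. field.
Qed.

(* Theta (2 (z - (1 + lam)) / lam) vanishes for z <= 1 + lam / 2 and is positive
   at the pole z = 1 + lam: a smooth function on R equal to 1 / (1 + lam - z)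
   near [-1,1]. *)
Definition inv_ext (Th : R -> R) (lam z : R) : R :=
  (1 + lam - z) / ((1 + lam - z) ^ 2 + Th (2 / lam * (z - (1 + lam)))).

Definition Theta_cdf (Th : R -> R) (x : R) : R := RInt Th (-1) x.

Section Mollifier.

Variable Th : R -> R.
Hypothesis Th_smooth : smooth Th.
Hypothesis Th_pos : forall z, -1 < z < 1 -> 0 < Th z.
Hypothesis Th_out : forall z, (z <= -1 \/ 1 <= z) -> Th z = 0.
Hypothesis Th_int : RInt Th (-1) 1 = 1.

Lemma Theta_ge0 (x : R) : 0 <= Th x.
Proof.
  destruct (Rle_dec x (-1)); [rewrite Th_out; lra|].
  destruct (Rle_dec 1 x); [rewrite Th_out; lra|].
  left. apply Th_pos. lra.
Qed.

Lemma ex_RInt_Theta (a b : R) : ex_RInt Th a b.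
Proof.
  apply (@ex_RInt_continuous R_CompleteNormedModule).
  intros; now apply smooth_continuous.
Qed.

Lemma RInt_Theta (a b : R) : RInt Th a b = Theta_cdf Th b - Theta_cdf Th a.
Proof.
  unfold Theta_cdf.
  pose proof (RInt_Chasles Th (-1) a b (ex_RInt_Theta _ _) (ex_RInt_Theta _ _)) as E.
  simpl in E. unfold plus in E; simpl in E. lra.
Qed.

Lemma RInt_Theta_out (a b : R) : (b <= -1 \/ 1 <= a) -> a <= b -> RInt Th a b = 0.
Proof.
  intros Hab Hle. rewrite (RInt_extR Th (fun _ => 0)).
  - rewrite RInt_constR. apply Rmult_0_r.
  - intros x Hx. rewrite Rmin_left, Rmax_right in Hx by lra. apply Th_out. lra.
Qed.

Lemma Theta_cdf_low (x : R) : x <= -1 -> Theta_cdf Th x = 0.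
Proof.
  intros Hx. unfold Theta_cdf. rewrite <- (opp_RInt_swap Th) by apply ex_RInt_Theta.
  rewrite RInt_Theta_out by lra. apply Ropp_0.
Qed.

Lemma Theta_cdf_high (x : R) : 1 <= x -> Theta_cdf Th x = 1.
Proof.
  intros Hx. pose proof (RInt_Theta 1 x) as E.
  rewrite RInt_Theta_out in E by lra.
  unfold Theta_cdf in *. lra.
Qed.

Lemma Theta_cdf_le (a b : R) : a <= b -> Theta_cdf Th a <= Theta_cdf Th b.
Proof.
  intros Hab. pose proof (RInt_Theta a b) as E.
  assert (0 <= RInt Th a b).
  { apply RInt_ge_0; auto using ex_RInt_Theta. intros; apply Theta_ge0. }
  lra.
Qed.

Lemma Theta_cdf_bounds (x : R) : 0 <= Theta_cdf Th x <= 1.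
Proof.
  rewrite <- (Theta_cdf_low (Rmin x (-1))), <- (Theta_cdf_high (Rmax x 1))
    by (apply Rmin_r || apply Rmax_r).
  split; apply Theta_cdf_le; [apply Rmin_l | apply Rmax_l].
Qed.

Lemma Theta_cdf_continuous (x : R) : continuous (Theta_cdf Th) x.
Proof.
  apply (continuous_RInt_1 Th (-1) x). apply filter_forall. intro z.
  apply (@RInt_correct R_CompleteNormedModule). apply ex_RInt_Theta.
Qed.

(* Substituting [y = (z - zb) / k] turns [psi'_k] into an increment of the
   distribution function of [Theta]. *)
Lemma psi'_k_cdf (k z : R) : 0 < k ->
  psi'_k Th k z = Theta_cdf Th ((z + 1 - k) / k) - Theta_cdf Th ((z - 1 + k) / k).
Proof.
  intros Hk. unfold psi'_k, Theta_k.
  set (u := - / k). set (v := z / k).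
  rewrite (RInt_extR _ (fun y => -1 * (u * Th (u * y + v)))).
  2:{ intros y _. unfold u, v. replace ((z - y) / k) with (- / k * y + z / k)
        by (field; lra). ring. }
  rewrite RInt_scalR.
  2:{ apply ex_RInt_scalR.
      apply (@ex_RInt_continuous R_CompleteNormedModule (fun y => Th (u * y + v))).
      intros y _. apply (continuous_comp (fun y => u * y + v) Th).
      - apply (@ex_derive_continuous R_AbsRing R_NormedModule). auto_derive; auto.
      - now apply smooth_continuous. }
  rewrite (RInt_comp_lin Th u v) by apply ex_RInt_Theta.
  rewrite RInt_Theta. unfold u, v.
  replace (- / k * (-1 + k) + z / k) with ((z + 1 - k) / k) by (field; lra).
  replace (- / k * (1 - k) + z / k) with ((z - 1 + k) / k) by (field; lra).
  ring.
Qed.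

Lemma psi'_k_bounds (k z : R) : 0 < k <= 1 -> 0 <= psi'_k Th k z <= 1.
Proof.
  intros Hk. rewrite psi'_k_cdf by lra.
  assert (Hle : (z - 1 + k) / k <= (z + 1 - k) / k).
  { apply Rmult_le_compat_r; [apply Rlt_le, Rinv_0_lt_compat|]; lra. }
  pose proof (Theta_cdf_le _ _ Hle).
  pose proof (Theta_cdf_bounds ((z - 1 + k) / k)).
  pose proof (Theta_cdf_bounds ((z + 1 - k) / k)).
  lra.
Qed.

Lemma psi'_k_mid (k z : R) : 0 < k -> -1 + 2 * k <= z <= 1 - 2 * k -> psi'_k Th k z = 1.
Proof.
  intros Hk Hz.
  assert (1 <= (z + 1 - k) / k).
  { apply (Rmult_le_reg_r k); [lra|]. field_simplify; lra. }
  assert ((z - 1 + k) / k <= -1).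
  { apply (Rmult_le_reg_r k); [lra|]. field_simplify; lra. }
  rewrite psi'_k_cdf, Theta_cdf_high, Theta_cdf_low by auto. ring.
Qed.

Lemma psi'_k_continuous (k z : R) : 0 < k -> continuous (psi'_k Th k) z.
Proof.
  intros Hk.
  apply (continuous_ext (fun z => Theta_cdf Th ((z + 1 - k) / k)
                                  - Theta_cdf Th ((z - 1 + k) / k))).
  { intro; symmetry; now apply psi'_k_cdf. }
  apply (continuous_minus (fun z => Theta_cdf Th ((z + 1 - k) / k))
                          (fun z => Theta_cdf Th ((z - 1 + k) / k)));
    apply continuous_comp; try apply Theta_cdf_continuous;
    apply (@ex_derive_continuous R_AbsRing R_NormedModule); auto_derive; auto.
Qed.

Section PositiveKappa.

Variable k : R.
Hypothesis k_range : 0 < k <= / 4.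

Let P := psi'_k Th k.
Let D := RInt P (-1) 1.

Lemma ex_RInt_psi'_k (a b : R) : ex_RInt P a b.
Proof.
  apply (@ex_RInt_continuous R_CompleteNormedModule).
  intros; apply psi'_k_continuous; lra.
Qed.

Lemma RInt_psi'_k_bounds : 2 - 4 * k <= D <= 2.
Proof.
  assert (HP : forall z, 0 <= P z <= 1) by (intro; apply psi'_k_bounds; lra).
  split.
  - unfold D.
    rewrite <- (RInt_Chasles P (-1) (-1 + 2 * k) 1),
      <- (RInt_Chasles P (-1 + 2 * k) (1 - 2 * k) 1) by apply ex_RInt_psi'_k.
    assert (0 <= RInt P (-1) (-1 + 2 * k)).
    { apply RInt_ge_0; [lra|apply ex_RInt_psi'_k|]. intros; apply HP. }
    assert (0 <= RInt P (1 - 2 * k) 1).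
    { apply RInt_ge_0; [lra|apply ex_RInt_psi'_k|]. intros; apply HP. }
    rewrite (RInt_extR P (fun _ => 1) (-1 + 2 * k) (1 - 2 * k)).
    + rewrite RInt_constR. simpl. unfold plus. simpl. lra.
    + intros x Hx. rewrite Rmin_left, Rmax_right in Hx by lra.
      apply psi'_k_mid; lra.
  - apply Rle_trans with (RInt (fun _ => 1) (-1) 1); [|rewrite RInt_constR; lra].
    apply RInt_le; [lra|apply ex_RInt_psi'_k|apply ex_RInt_const|]. intros; apply HP.
Qed.

Lemma phi'_k_psi'_k (z : R) : phi'_k Th k z = - (P z / D).
Proof.
  assert (HD := RInt_psi'_k_bounds).
  unfold phi'_k, phi_k. destruct (Req_EM_T k 0); [lra|]. fold P D.
  assert (HP : is_derive (RInt P (-1)) z (P z)).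
  { apply (is_derive_RInt P _ (-1)).
    - apply filter_forall. intro y.
      apply (@RInt_correct R_CompleteNormedModule), ex_RInt_psi'_k.
    - apply psi'_k_continuous; lra. }
  assert (HD' : is_derive (fun y => 1 - y / D) (RInt P (-1) z) (- / D))
    by (auto_derive; [auto|ring]).
  apply is_derive_unique.
  replace (- (P z / D)) with (scal (P z) (- / D))
    by (unfold scal; simpl; unfold mult; simpl; field; lra).
  exact (is_derive_comp _ _ z _ _ HD' HP).
Qed.

(* Split 1/2 = P/2 + (1 - P)/2: both P/D - P/2 and (1 - P)/2 are nonnegative
   with mass 1 - D/2 <= 2 k, and the kernel lies in (0, 1/mu]. *)
Lemma near_uniform_psi'_k : near_uniform (fun z => P z / D) k.
Proof.
  intros mu Hmu. destruct RInt_psi'_k_bounds as [HD1 HD2].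
  set (h := fun z => / (1 + mu - z)).
  assert (Hh : forall z, -1 < z < 1 -> 0 <= h z <= / mu).
  { intros z Hz. unfold h.
    split; [apply Rlt_le, Rinv_0_lt_compat|apply Rinv_le_contravar]; lra. }
  assert (HP : forall z, 0 <= P z <= 1) by (intro; apply psi'_k_bounds; lra).
  assert (Ih : forall u : R -> R, (forall z, continuous u z) ->
                 ex_RInt (fun z => u z * h z) (-1) 1).
  { intros u Cu. apply ex_RInt_continuous_11. intros z Hz.
    apply (continuous_mult u h); [apply Cu|apply continuous_inv_shift; lra]. }
  assert (CP : forall z, continuous P z) by (intro; apply psi'_k_continuous; lra).
  assert (CQ : forall z, continuous (fun z => 1 - P z) z).
  { intro z. apply (continuous_minus (fun _ => 1) P); [apply continuous_const|apply CP]. }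
  assert (IQ : ex_RInt (fun z => 1 - P z) (-1) 1).
  { apply ex_RInt_continuous_11. intros; apply CQ. }
  destruct (RInt_mult_bounds P h (-1) 1 0 (/ mu)) as [A0 A1];
    [lra|apply ex_RInt_psi'_k|apply Ih, CP|intros; split; [apply HP|apply Hh]; lra|].
  destruct (RInt_mult_bounds (fun z => 1 - P z) h (-1) 1 0 (/ mu)) as [B0 B1];
    [lra|apply IQ|apply Ih, CQ|intros z Hz; split; [specialize (HP z); lra|apply Hh; lra]|].
  rewrite RInt_minusR, RInt_constR in B1 by (apply ex_RInt_const || apply ex_RInt_psi'_k).
  fold D in A1, B1.
  unfold stieltjes.
  rewrite (RInt_extR _ (fun z => / D * (P z * h z))) by (intros; unfold h, Rdiv; ring).
  rewrite (RInt_extR (fun z => / 2 * / (1 + mu - z))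
                     (fun z => / 2 * (P z * h z + (1 - P z) * h z)))
    by (intros; unfold h; ring).
  pose proof (Ih P CP) as IPh. pose proof (Ih _ CQ) as IQh.
  rewrite RInt_scalR, RInt_scalR, RInt_plusR by auto using ex_RInt_plusR.
  set (A := RInt (fun z => P z * h z) (-1) 1) in *.
  set (B := RInt (fun z => (1 - P z) * h z) (-1) 1) in *.
  assert (HDD : D * / D = 1) by (field; lra).
  assert (HiD : / 2 <= / D) by (apply Rinv_le_contravar; lra).
  assert (Hm : 0 < / mu) by (apply Rinv_0_lt_compat; lra).
  assert (X : 0 <= (/ mu * D - A) * (/ D - / 2)) by (apply Rmult_le_pos; lra).
  unfold Rdiv. apply Rabs_le. split; nra.
Qed.

End PositiveKappa.

Lemma phi'_k_weight (k : R) : 0 <= k <= / 4 ->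
  exists w, (forall z, continuous w z) /\ (forall z, -1 <= z <= 1 -> 0 <= w z) /\
    RInt w (-1) 1 = 1 /\ near_uniform w k /\ forall z, phi'_k Th k z = - w z.
Proof.
  intros Hk. destruct (Req_dec k 0) as [->|Hk0].
  - exists (fun _ => / 2). repeat split.
    + intro; apply continuous_const.
    + intros; lra.
    + rewrite RInt_constR. eq_in_R. field.
    + intros mu Hmu. rewrite Rminus_diag, Rabs_R0. unfold Rdiv. lra.
    + intro z. unfold phi'_k, phi_k. destruct (Req_EM_T 0 0); [|lra].
      apply is_derive_unique. auto_derive; auto. field.
  - assert (Hk' : 0 < k <= / 4) by lra.
    pose proof (RInt_psi'_k_bounds k Hk') as HD.
    exists (fun z => psi'_k Th k z / RInt (psi'_k Th k) (-1) 1). repeat split.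
    + intro z. apply (continuous_mult (psi'_k Th k) (fun _ => _));
        [apply psi'_k_continuous; lra|apply continuous_const].
    + intros z _. apply Rmult_le_pos; [apply psi'_k_bounds; lra|].
      apply Rlt_le, Rinv_0_lt_compat. lra.
    + rewrite (RInt_extR _ (fun z => / RInt (psi'_k Th k) (-1) 1 * psi'_k Th k z))
        by (intros; unfold Rdiv; ring).
      rewrite RInt_scalR by apply (ex_RInt_psi'_k k Hk'). eq_in_R. field. lra.
    + apply (near_uniform_psi'_k k Hk').
    + apply (phi'_k_psi'_k k Hk').
Qed.

Section Extension.

Variable lam : R.
Hypothesis lam_pos : 0 < lam.

Lemma inv_ext_smooth : smooth (inv_ext Th lam).
Proof.
  apply smooth_Cn. intro n.
  assert (Hlin : Cn n (fun z => 1 + lam - z)).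
  { apply (Cn_ext _ (fun z => (1 + lam) + (-1) * z)); [intro; ring|].
    apply Cn_plus; [apply Cn_const|apply Cn_mult; [apply Cn_const|apply Cn_id]]. }
  unfold inv_ext, Rdiv. apply Cn_mult; [exact Hlin|]. apply Cn_inv.
  - apply Cn_plus.
    + apply (Cn_ext _ (fun z => (1 + lam - z) * (1 + lam - z))); [intro; ring|].
      now apply Cn_mult.
    + apply Cn_comp_affine. now apply smooth_Cn.
  - intros z. destruct (Req_dec z (1 + lam)) as [->|Hz].
    + rewrite Rminus_diag, Rmult_0_r. pose proof (Th_pos 0). simpl. lra.
    + pose proof (pow2_gt_0 (1 + lam - z) ltac:(lra)).
      pose proof (Theta_ge0 (2 / lam * (z - (1 + lam)))). lra.
Qed.

Lemma inv_ext_eq (z : R) : z <= 1 + lam / 2 -> inv_ext Th lam z = 1 / (1 + lam - z).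
Proof.
  intros Hz. unfold inv_ext. rewrite Th_out.
  - field. lra.
  - left. apply (Rmult_le_reg_l lam); [lra|]. field_simplify; lra.
Qed.

Lemma Derive_n_inv_ext (n : nat) (z : R) : z < 1 + lam / 2 ->
  Derive_n (inv_ext Th lam) n z = INR (fact n) / (1 + lam - z) ^ S n.
Proof.
  intros Hz. rewrite (Derive_n_ext_loc _ (fun t => / (1 + lam - t))).
  - apply Derive_n_inv_sub. lra.
  - apply (filter_imp (fun t => t < 1 + lam / 2)); [|exact (open_lt _ z Hz)].
    intros t Ht. rewrite inv_ext_eq by lra. apply Rmult_1_l.
Qed.

Lemma Derive_n_inv_ext_bound (n : nat) (z L : R) : 0 < L <= lam -> -1 <= z <= 1 ->
  Rabs (Derive_n (inv_ext Th lam) n z) <= INR (fact n) / L ^ S n.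
Proof.
  intros HL Hz. rewrite Derive_n_inv_ext by lra.
  pose proof (INR_fact_lt_0 n).
  assert (0 < L ^ S n) by (apply pow_lt; lra).
  assert (L ^ S n <= (1 + lam - z) ^ S n) by (apply pow_incr; lra).
  rewrite Rabs_pos_eq by (apply Rdiv_le_0_compat; [lra|apply pow_lt; lra]).
  unfold Rdiv. apply Rmult_le_compat_l; [lra|]. now apply Rinv_le_contravar.
Qed.

Lemma inv_ext_L2 (L : R) : 0 < L <= lam ->
  sqrt (RInt (fun z => inv_ext Th lam z ^ 2) (-1) 1) <= 1 + 2 / L ^ 2.
Proof.
  intros HL. apply sqrt_le_1_plus; [apply Rdiv_le_0_compat; nra|].
  apply Rle_trans with (RInt (fun _ => / L ^ 2) (-1) 1);
    [|rewrite RInt_constR; unfold Rdiv; lra].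
  apply RInt_le; [lra| |apply ex_RInt_const|].
  - apply ex_RInt_continuous_11. intros z _.
    apply (continuous_ext (fun z => inv_ext Th lam z * (inv_ext Th lam z * 1)));
      [intro; reflexivity|].
    pose proof (smooth_continuous _ z inv_ext_smooth).
    apply (continuous_mult (inv_ext Th lam)); auto.
    apply (continuous_mult (inv_ext Th lam)); auto using continuous_const.
  - intros z Hz. rewrite inv_ext_eq by lra.
    assert (0 < 1 / (1 + lam - z) <= / L).
    { unfold Rdiv. rewrite Rmult_1_l.
      split; [apply Rinv_0_lt_compat|apply Rinv_le_contravar]; lra. }
    rewrite <- pow_inv. simpl. nra.
Qed.

End Extension.

Lemma solves_inv_form (m : nat) (k lam : R) (b : R -> R) :
  smooth_on_cc (-1) 1 b -> (exists z, -1 <= z <= 1 /\ b z <> 0) -> solves Th m k lam b ->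
  exists K, K <> 0 /\
    forall z, -1 <= z <= 1 -> 1 + lam - z <> 0 /\ b z = K / (1 + lam - z).
Proof.
  intros [g [Hg Hbg]] [z1 [Hz1 Hb1]] Hsol. unfold solves in Hsol.
  set (K := - (1 / (2 * INR m)) * RInt (fun zb => phi'_k Th k zb * b zb) (-1) 1) in Hsol.
  assert (Hnz : forall z, -1 <= z <= 1 -> K <> 0 -> 1 + lam - z <> 0).
  { intros z Hz HK E. apply HK. rewrite <- (Hsol z Hz), E. ring. }
  assert (HK : K <> 0).
  { intros HK.
    assert (Hpole : forall z, -1 <= z <= 1 -> b z <> 0 -> z = 1 + lam).
    { intros z Hz Hbz.
      destruct (Rmult_integral _ _ (eq_trans (Hsol z Hz) HK)); [lra|contradiction]. }
    destruct (continuous_nonzero_elsewhere g (-1) 1 z1) as [z [Hz [Hzz1 Hgz]]];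
      [lra|exact Hz1|now apply smooth_continuous|now rewrite <- Hbg|].
    rewrite <- Hbg in Hgz by exact Hz.
    apply Hzz1. now rewrite (Hpole z Hz Hgz), (Hpole z1 Hz1 Hb1). }
  exists K. split; [exact HK|]. intros z Hz. split; [now apply Hnz|].
  rewrite <- (Hsol z Hz). field. now apply Hnz.
Qed.

Section Equation.

Variables (m : nat) (k : R) (w : R -> R).
Hypothesis m_pos : (1 <= m)%nat.
Hypothesis w_cont : forall z, continuous w z.
Hypothesis w_ge0 : forall z, -1 <= z <= 1 -> 0 <= w z.
Hypothesis w_int : RInt w (-1) 1 = 1.
Hypothesis phi'_w : forall z, phi'_k Th k z = - w z.

Lemma RInt_phi'_k_inv (K mu : R) (b : R -> R) :
  (forall z, -1 <= z <= 1 -> 1 + mu - z <> 0 /\ b z = K / (1 + mu - z)) ->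
  RInt (fun zb => phi'_k Th k zb * b zb) (-1) 1 = - K * stieltjes w mu.
Proof.
  intros Hb. unfold stieltjes.
  rewrite <- RInt_scalR by (apply ex_RInt_stieltjes; [exact w_cont|]; intros; now apply Hb).
  apply RInt_extR. intros z Hz. rewrite Rmin_left, Rmax_right in Hz by lra.
  rewrite phi'_w. destruct (Hb z ltac:(lra)) as [_ ->]. unfold Rdiv. ring.
Qed.

Variable lam : R.
Hypothesis lam_pos : 0 < lam.
Hypothesis lam_root : stieltjes w lam = 2 * INR m.

Lemma RInt_phi'_k_inv_ext :
  RInt (fun zb => phi'_k Th k zb * inv_ext Th lam zb) (-1) 1 = - (2 * INR m).
Proof.
  rewrite (RInt_phi'_k_inv 1 lam), lam_root; [eq_in_R; ring|].
  intros z Hz. split; [lra|]. apply inv_ext_eq; auto; lra.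
Qed.

Lemma solves_inv_ext : solves Th m k lam (inv_ext Th lam).
Proof.
  pose proof (lt_0_INR m m_pos). intros z Hz.
  rewrite RInt_phi'_k_inv_ext, inv_ext_eq by (auto; lra). field. split; lra.
Qed.

Lemma solves_unique (lam' : R) (b : R -> R) :
  smooth_on_cc (-1) 1 b -> (exists z, -1 <= z <= 1 /\ b z <> 0) ->
  solves Th m k lam' b ->
  lam' = lam /\ exists c, forall z, -1 <= z <= 1 -> b z = c * inv_ext Th lam z.
Proof.
  intros Hb Hnz Hsol. pose proof (lt_0_INR m m_pos) as Hm.
  destruct (solves_inv_form m k lam' b Hb Hnz Hsol) as [K [HK HbK]].
  assert (Hroot : stieltjes w lam' = 2 * INR m).
  { destruct (HbK 1 ltac:(lra)) as [Hn Hb1].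
    pose proof (Hsol 1 ltac:(lra)) as E.
    rewrite (RInt_phi'_k_inv K lam' b HbK), Hb1 in E.
    assert (E' : K * (stieltjes w lam' - 2 * INR m) = 0).
    { transitivity (2 * INR m * (- (1 / (2 * INR m)) * (- K * stieltjes w lam')
                                 - (1 + lam' - 1) * (K / (1 + lam' - 1)))).
      - field. split; lra.
      - rewrite E. ring. }
    destruct (Rmult_integral _ _ E'); [contradiction|lra]. }
  assert (Heq : lam' = lam).
  { apply (stieltjes_inj w w_cont w_ge0 w_int); [exact lam_pos|lra| |].
    - intros; now apply HbK.
    - now rewrite Hroot, lam_root. }
  subst lam'. split; [reflexivity|]. exists K. intros z Hz.
  rewrite inv_ext_eq by (auto; lra). destruct (HbK z Hz) as [Hn ->]. field. exact Hn.
Qed.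

End Equation.
End Mollifier.

Theorem proposition5p7 :
  forall Theta : R -> R,
    smooth Theta ->
    (forall z, -1 < z < 1 -> 0 < Theta z) ->
    (forall z, (z <= -1 \/ 1 <= z) -> Theta z = 0) ->
    RInt Theta (-1) 1 = 1 ->
  forall M : R, 1 < M ->
  exists kappa0 : R, 0 < kappa0 /\
  exists (C : R) (Ck : nat -> R),
  forall (m : nat) (kappa : R),
    (1 <= m)%nat -> INR m < M ->
    0 <= kappa < kappa0 ->
    exists (lam1 : R) (b0 : R -> R),
      smooth_on_cc (-1) 1 b0 /\
      solves Theta m kappa lam1 b0 /\
      (* uniqueness modulo constant multiples, among nonzero C^oo solutions *)
      (forall (lam : R) (b : R -> R),
          smooth_on_cc (-1) 1 b ->
          (exists z, -1 <= z <= 1 /\ b z <> 0) ->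
          solves Theta m kappa lam b ->
          lam = lam1 /\ exists c : R, forall z, -1 <= z <= 1 -> b z = c * b0 z) /\
      (forall z, -1 <= z <= 1 -> b0 z = 1 / (1 + lam1 - z)) /\
      Rabs (lam1 - 2 / (exp (4 * INR m) - 1)) <= C * kappa /\
      sqrt (RInt (fun z => b0 z ^ 2) (-1) 1) <= C /\
      (forall (k : nat) (z : R), -1 <= z <= 1 -> Rabs (Derive_n b0 k z) <= Ck k) /\
      (let a1 := / 2 * (- (1 / (2 * INR m)) * exp (- (2 * INR m))
                        * RInt (fun zb => phi'_k Theta kappa zb * b0 zb) (-1) 1) in
       a1 = / 2 * exp (- (2 * INR m))).
Proof.
  intros Th Hs Hpos Hout Hint M HM.
  set (L := lambda0 M).
  assert (HL : 0 < L) by (apply lambda0_pos; lra).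
  exists (L * L / 96). split; [nra|].
  exists (48 / L + (1 + 2 / (L / 2) ^ 2)), (fun n => INR (fact n) / (L / 2) ^ S n).
  intros m k Hm HmM Hk.
  pose proof (le_INR 1 m Hm) as Hm1. simpl in Hm1.
  assert (Hl0 : L <= lambda0 (INR m) <= / 2)
    by (split; [apply lambda0_le|apply lambda0_le_half]; lra).
  destruct (phi'_k_weight Th Hs Hpos Hout Hint k) as [w [Hwc [Hw0 [Hw1 [Hnear Hphi]]]]];
    [nra|].
  destruct (stieltjes_root_near w Hwc Hw0 Hw1 (2 * INR m) (lambda0 (INR m)) L k)
    as [lam [Hroot [Hlam Herr]]]; [lra|lra|lra|..].
  { rewrite <- stieltjes_uniform_lambda0 by lra. apply Hnear. lra. }
  assert (HC : 0 <= 1 + 2 / (L / 2) ^ 2)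
    by (apply Rplus_le_le_0_compat, Rdiv_le_0_compat; nra).
  exists lam, (inv_ext Th lam).
  split; [|split; [|split; [|split; [|split; [|split; [|split]]]]]].
  - exists (inv_ext Th lam). split; [apply inv_ext_smooth; auto; lra|reflexivity].
  - apply solves_inv_ext with w; auto; lra.
  - intros lam' b. apply solves_unique with w; auto; lra.
  - intros z Hz. apply inv_ext_eq; auto; lra.
  - apply (Rle_trans _ _ _ Herr). unfold Rdiv. nra.
  - assert (0 <= 48 / L) by (apply Rdiv_le_0_compat; lra).
    apply Rle_trans with (1 + 2 / (L / 2) ^ 2); [apply inv_ext_L2; auto; lra|lra].
  - intros n z Hz. apply Derive_n_inv_ext_bound; auto; lra.
  - cbv zeta. rewrite (RInt_phi'_k_inv_ext Th Hout m k w) by (auto; lra). field. lra.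
Qed.
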